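(* Let $\Psi\in\mathcal{L}PSH^*(\mathbb{C}^n)$ be an indicator, let $\psi(t)=\Psi(e^{t_1},\ldots,e^{t_n})$, and suppose that $\psi^+=\max\{\psi,0\}$ is the supporting function of a lower set. Then \[ \inf\{\psi^+(t):\ t\in H_1\}=\inf\{\psi^+(t):\ t\in\Sigma_{\mathbf 1}\}. \]
   Context: $\mathcal{L}PSH^*(\mathbb{C}^n)$: plurisubharmonic functions $u$ on $\mathbb{C}^n$ with $\limsup_{|z|\to\infty}u(z)/\log|z|<\infty$ and $u(z)\to+\infty$ as $|z|\to\infty$. An indicator is a plurisubharmonic $\Psi$ with $\Psi(z)=\Psi(|z_1|,\ldots,|z_n|)$ and $\Psi(|z_1|^c,\ldots,|z_n|^c)=c\Psi(z)$ for all $c>0$. The supporting function of $\Gamma$ is $h_\Gamma(t)=\sup\{\langle a,t\rangle:a\in\Gamma\}$. A compact convex set $\Gamma\subset\overline{\mathbb{R}}_+^n$ (closed nonnegative orthant) is a lower set if $a\in\Gamma$ implies $b\in\Gamma$ for every $b$ with $0<b_k<a_k$ for all $k$. $H_1=\{t\in\mathbb{R}^n:\sum_kt_k=1\}$ and $\Sigma_{\mathbf 1}=\{b\in\overline{\mathbb{R}}_+^n:\sum_kb_k=1\}$. *)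

From HB Require Import structures.
From mathcomp Require Import all_boot all_order all_algebra.
From mathcomp Require Import all_classical all_reals all_analysis.
From mathcomp Require Import complex.
Set Implicit Arguments. Unset Strict Implicit. Unset Printing Implicit Defensive.
Import Order.TTheory GRing.Theory Num.Theory.
Import numFieldNormedType.Exports.
Local Open Scope classical_set_scope.
Local Open Scope ring_scope.
Local Open Scope ereal_scope.

Section Defs.
Variable R : realType.

Definition Cn (n : nat) := 'I_n -> R[i].

Definition cabs (x : R[i]) : R := Normc.normc x.

Definition cnorm (n : nat) (z : Cn n) : R :=
  Num.sqrt (\sum_(k < n) cabs (z k) ^+ 2)%R.

Definition expi (theta : R) : R[i] := Complex (cos theta) (sin theta).

Definition usc (n : nat) (u : Cn n -> \bar R) : Prop :=
  forall (z : Cn n) (c : R), u z < c%:E ->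
    exists2 d : R, (0 < d)%R &
      forall w : Cn n, (cnorm (fun k => w k - z k) < d)%R -> u w < c%:E.

Definition psh (n : nat) (u : Cn n -> \bar R) : Prop :=
  [/\ forall z, u z < +oo,
      usc u &
      forall a b : Cn n,
        u a <= ((2 * pi)^-1)%:E *
          \int[@lebesgue_measure R]_(theta in `[0%R, (2 * pi)%R])
             u (fun k => a k + expi theta * b k)%R].

Definition LPSHstar (n : nat) (u : Cn n -> \bar R) : Prop :=
  [/\ psh u,
      (exists C r0 : R, forall z : Cn n, (r0 < cnorm z)%R ->
          u z * ((ln (cnorm z))^-1)%:E <= C%:E) &
      (forall M : R, exists r0 : R, forall z : Cn n,
          (r0 < cnorm z)%R -> M%:E < u z)].

Definition toC (x : R) : R[i] := Complex x 0%R.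

Definition cabsv (n : nat) (z : Cn n) : Cn n := fun k => toC (cabs (z k)).

Definition indicator (n : nat) (Psi : Cn n -> \bar R) : Prop :=
  [/\ psh Psi,
      (forall z, Psi z = Psi (cabsv z)) &
      (forall (z : Cn n) (c : R), (0 < c)%R ->
         Psi (fun k => toC (cabs (z k) `^ c)%R) = c%:E * Psi z)].

Definition psi_of (n : nat) (Psi : Cn n -> \bar R) (t : 'rV[R]_n) : \bar R :=
  Psi (fun k => toC (expR (t ord0 k))).

Definition dotR (n : nat) (a t : 'rV[R]_n) : R := (\sum_(k < n) a ord0 k * t ord0 k)%R.

Definition supfun (n : nat) (G : set 'rV[R]_n) (t : 'rV[R]_n) : \bar R :=
  ereal_sup [set (dotR a t)%:E | a in G].

Definition nonneg_orthant (n : nat) : set 'rV[R]_n :=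
  [set a | forall k, (0 <= a ord0 k)%R].

Definition convex_set_of (n : nat) (G : set 'rV[R]_n) : Prop :=
  forall a b : 'rV[R]_n, G a -> G b -> forall l : R, (0 <= l <= 1)%R ->
    G (l *: a + (1 - l) *: b)%R.

Definition lower_set (n : nat) (G : set 'rV[R]_n) : Prop :=
  [/\ compact G, convex_set_of G, G `<=` @nonneg_orthant n &
      forall a b : 'rV[R]_n, G a -> (forall k, (0 < b ord0 k < a ord0 k)%R) -> G b].

Definition H1 (n : nat) : set 'rV[R]_n := [set t | (\sum_(k < n) t ord0 k)%R = 1%R].

Definition Sigma1 (n : nat) : set 'rV[R]_n := @nonneg_orthant n `&` @H1 n.

End Defs.
Arguments nonneg_orthant {R} n.
Arguments H1 {R} n.
Arguments Sigma1 {R} n.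

(* Since Sigma1 is contained in H1, only one inequality needs proof. Let h be
   the supporting function of the lower set G, so that psi^+ = h. For t in H1
   let t^+ = max(t, 0) coordinatewise and S = sum_k t^+_k >= 1. Then t^+/S lies
   in Sigma1 and h(t^+/S) = h(t^+)/S <= h(t^+), because h >= 0 on the orthant.
   Finally h(t^+) <= h(t): a point a of G may be pushed down to almost 0 in the
   coordinates where t is negative without leaving G. Doing so inside a lower
   set needs a point of G with all coordinates positive; it exists by convexity,
   since psi -> +oo forces, for each k, a point of G with positive k-th
   coordinate. *)

From HB Require Import structures.
From mathcomp Require Import all_boot all_order all_algebra.
From mathcomp Require Import all_classical all_reals all_analysis.
From mathcomp Require Import complex lra.
Set Implicit Arguments. Unset Strict Implicit.
Import Order.TTheory GRing.Theory Num.Theory.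
Local Open Scope classical_set_scope.
Local Open Scope ring_scope.

Lemma maxe0_EFin (R : realType) (x : \bar R) : (x < +oo)%E ->
  exists r : R, maxe x 0%E = r%:E.
Proof.
case: x => [x| |] //= _; last by exists 0; rewrite maxNye.
by exists (Num.max x 0); rewrite EFin_max.
Qed.

Lemma cabs_toC (R : realType) (x : R) : cabs (toC x) = `|x|.
Proof. by rewrite /cabs /toC /= expr0n addr0 sqrtr_sqr. Qed.

Lemma cabs_le_cnorm (R : realType) (n : nat) (z : Cn R n) (k : 'I_n) :
  cabs (z k) <= cnorm z.
Proof.
rewrite /cnorm -[cabs _]ger0_norm; last first.
  by rewrite /cabs; case: (z k) => * /=; exact: sqrtr_ge0.
rewrite -(sqrtr_sqr (cabs (z k))) ler_wsqrtr // (bigD1 k) //= lerDl.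
by rewrite sumr_ge0 // => i _; rewrite sqr_ge0.
Qed.

Lemma le_of_forall_sub_mul_le (R : realFieldType) (x r K : R) : 0 <= K ->
  (forall d, 0 < d < 1 -> x - d * K <= r) -> x <= r.
Proof.
move=> K0 H; apply/ler_addgt0Pr => e e0.
have dK : e / (K + e + 1) * K <= e.
  by rewrite mulrAC ler_pdivrMr ?ler_pM2l //; lra.
have d01 : 0 < e / (K + e + 1) < 1.
  by rewrite divr_gt0 ?ltr_pdivrMr /=; lra.
by have := H _ d01; lra.
Qed.

Lemma lower_shift_bound (R : realFieldType) (a c d t : R) :
  0 <= a -> 0 <= c -> 0 <= d <= 1 ->
  a * Num.max t 0 - d * (2 * (a + c) * `|t|) <=
    (if 0 <= t then 1 - d else d) * ((1 - d) * a + d * c) * t.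
Proof.
move=> a0 c0 /andP[d0 d1]; have d1' : 0 <= 1 - d by rewrite subr_ge0.
case: (lerP 0 t) => t0.
  rewrite ger0_norm //.
  have : 0 <= d * d * (a * t) by rewrite !mulr_ge0.
  have : 0 <= d * (1 - d) * (c * t) by rewrite !mulr_ge0.
  have : 0 <= d * (c * t) by rewrite !mulr_ge0.
  nra.
rewrite ltr0_norm // mulr0.
have at0 : 0 <= - (a * t) by rewrite oppr_ge0 mulr_ge0_le0 // ltW.
have ct0 : 0 <= - (c * t) by rewrite oppr_ge0 mulr_ge0_le0 // ltW.
have : 0 <= d * - (a * t) by rewrite mulr_ge0.
have : 0 <= d * d * - (a * t) by rewrite !mulr_ge0.
have : 0 <= d * - (c * t) by rewrite mulr_ge0.
have : 0 <= d * (1 - d) * - (c * t) by rewrite !mulr_ge0.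
nra.
Qed.

Definition posrow (R : realType) (n : nat) (t : 'rV[R]_n) : 'rV[R]_n :=
  \row_k Num.max (t ord0 k) 0.

Section DotProduct.
Variables (R : realType) (n : nat).
Implicit Types a t : 'rV[R]_n.

Lemma dotRZr a t (s : R) : dotR a (s *: t) = s * dotR a t.
Proof. by rewrite /dotR mulr_sumr; apply: eq_bigr => k _; rewrite mxE mulrCA. Qed.

Lemma dotR_delta a (k : 'I_n) : dotR a (delta_mx ord0 k) = a ord0 k.
Proof.
rewrite /dotR (bigD1 k) //= big1 => [|i /negbTE ik]; rewrite mxE.
  by rewrite !eqxx mulr1 addr0.
by rewrite eqxx ik mulr0.
Qed.

Lemma dotR_ge0 a t : nonneg_orthant n a -> nonneg_orthant n t -> 0 <= dotR a t.
Proof. by move=> a0 t0; apply: sumr_ge0 => k _; rewrite mulr_ge0. Qed.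

Lemma posrow_ge0 t : nonneg_orthant n (posrow t).
Proof. by move=> k; rewrite mxE le_max lexx orbT. Qed.

End DotProduct.

Lemma supfun_ge0_nonempty (R : realType) (n : nat) (G : set 'rV[R]_n)
    (t : 'rV[R]_n) :
  (0 <= supfun G t)%E -> exists a, G a.
Proof.
case: (pselect (exists a, G a)) => // nG.
have -> : G = set0 by apply/seteqP; split => // a Ga; apply: nG; exists a.
by rewrite /supfun image_set0 ereal_sup0.
Qed.

Lemma supfun_coord_gt0 (R : realType) (n : nat) (Psi : Cn R n -> \bar R)
    (G : set 'rV[R]_n) :
  (forall M : R, exists r0 : R, forall z, r0 < cnorm z -> (M%:E < Psi z)%E) ->
  (forall t, maxe (psi_of Psi t) 0%E = supfun G t) ->
  forall k, exists2 a, G a & 0 < a ord0 k.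
Proof.
move=> Psi_grow hG k.
have [r0 Psi_gt0] := Psi_grow 0.
pose s : R := `|r0| + 1; have s_gt0 : 0 < s by rewrite ltr_pwDr.
have psi_gt0 : (0%:E < psi_of Psi (s *: delta_mx ord0 k))%E.
  apply: Psi_gt0; apply: lt_le_trans (cabs_le_cnorm _ k).
  rewrite cabs_toC !mxE !eqxx mulr1 ger0_norm ?expR_ge0 //.
  apply: le_lt_trans (ler_norm r0) _; apply: lt_le_trans (expR_ge1Dx s).
  by rewrite /s; lra.
have : (0 < supfun G (s *: delta_mx ord0 k))%E by rewrite -hG lt_max psi_gt0.
case/ereal_sup_gt => _ [a Ga <-]; rewrite lte_fin dotRZr dotR_delta => sa.
by exists a => //; rewrite -(pmulr_rgt0 _ s_gt0).
Qed.

Section LowerSet.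
Variables (R : realType) (n : nat) (G : set 'rV[R]_n).
Hypothesis G_convex : convex_set_of G.
Hypothesis G_orthant : G `<=` nonneg_orthant n.

Lemma convex_orthant_pos_point : (exists a, G a) ->
  (forall k, exists2 a, G a & 0 < a ord0 k) ->
  exists2 c, G c & forall k, 0 < c ord0 k.
Proof.
move=> [a0 Ga0] G_coord.
suff /(_ n (leqnn n)) [c Gc c_gt0] : forall m, (m <= n)%N ->
    exists2 c, G c & forall k : 'I_n, (k < m)%N -> 0 < c ord0 k.
  by exists c => // k; apply: c_gt0.
elim=> [|m IH] lt_mn; first by exists a0.
have [c Gc c_gt0] := IH (ltnW lt_mn).
have [a Ga a_gt0] := G_coord (Ordinal lt_mn).
exists (2^-1 *: c + (1 - 2^-1) *: a); first by apply: G_convex => //; lra.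
move=> k; rewrite ltnS leq_eqVlt !mxE => /orP[/eqP km|lt_km].
  have -> : k = Ordinal lt_mn by apply: val_inj.
  by have := G_orthant Gc (Ordinal lt_mn); lra.
by have := c_gt0 _ lt_km; have := G_orthant Ga k; lra.
Qed.

Hypothesis G_lower :
  forall a b : 'rV[R]_n, G a -> (forall k, 0 < b ord0 k < a ord0 k) -> G b.
Variable c : 'rV[R]_n.
Hypotheses (Gc : G c) (c_gt0 : forall k, 0 < c ord0 k).

Lemma dotR_posrow_le a t r : G a -> supfun G t = r%:E -> dotR a (posrow t) <= r.
Proof.
move=> Ga htr; have a_ge0 := G_orthant Ga.
pose K := \sum_k 2 * (a ord0 k + c ord0 k) * `|t ord0 k|.
apply: (@le_of_forall_sub_mul_le _ _ _ K).
  by apply: sumr_ge0 => k _; rewrite !mulr_ge0 ?addr_ge0 // ltW.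
move=> d /andP[d_gt0 d_lt1].
pose ad := (1 - d) *: a + d *: c.
have Gad : G ad by have := G_convex Ga Gc (l := 1 - d); rewrite subKr; apply; lra.
(* [b] is a strict lower point of [ad], nearly [ad] where [t] is nonnegative
   and nearly [0] elsewhere, so [dotR b t] is [dotR a (posrow t)] up to [d * K]. *)
pose b := \row_k ((if 0 <= t ord0 k then 1 - d else d) * ad ord0 k).
have ad_gt0 k : 0 < ad ord0 k.
  by rewrite !mxE; have := a_ge0 k; have := c_gt0 k; nra.
have Gb : G b.
  apply: (G_lower Gad) => k; rewrite mxE; have := ad_gt0 k.
  by case: ifP => _ ad_k; rewrite pmulr_lgt0 // gtr_pMl //; lra.
have : ((dotR b t)%:E <= r%:E)%E by rewrite -htr; apply: ereal_sup_ubound; exists b.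
rewrite lee_fin; apply: le_trans.
rewrite /dotR /K mulr_sumr -sumrB; apply: ler_sum => k _; rewrite !mxE.
by apply: lower_shift_bound; [exact: a_ge0 | exact: ltW | lra].
Qed.

Lemma supfun_H1_ge_Sigma1 t r : H1 n t -> supfun G t = r%:E ->
  exists2 t', Sigma1 n t' & (supfun G t' <= r%:E)%E.
Proof.
move=> t1 htr; pose S := \sum_k posrow t ord0 k.
have S_ge1 : 1 <= S by rewrite -t1; apply: ler_sum => k _; rewrite mxE le_max lexx.
have S_gt0 : 0 < S by apply: lt_le_trans S_ge1.
exists (S^-1 *: posrow t).
  split=> [k|]; first by rewrite mxE mulr_ge0 ?(posrow_ge0 t k) // invr_ge0 ltW.
  rewrite /H1 /=; under eq_bigr do rewrite mxE.
  by rewrite -mulr_sumr mulVf // gt_eqF.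
apply: ge_ereal_sup => _ [a Ga <-]; rewrite lee_fin dotRZr.
apply: le_trans (dotR_posrow_le Ga htr).
by rewrite ler_piMl ?dotR_ge0 ?invf_le1 //; [exact: G_orthant | exact: posrow_ge0].
Qed.

End LowerSet.

Local Open Scope ereal_scope.

Theorem lemma6p7 (R : realType) (n : nat) (Psi : Cn R n -> \bar R) :
  LPSHstar Psi -> indicator Psi ->
  (exists G : set 'rV[R]_n, lower_set G /\
     forall t, maxe (psi_of Psi t) 0 = supfun G t) ->
  ereal_inf [set maxe (psi_of Psi t) 0 | t in H1 n] =
  ereal_inf [set maxe (psi_of Psi t) 0 | t in Sigma1 n].
Proof.
move=> [[Psi_fin _ _] _ Psi_grow] _ [G [[_ G_convex G_orthant G_lower] hG]].
have G_ne : exists a, G a.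
  by apply: (@supfun_ge0_nonempty _ _ _ 0); rewrite -hG le_max lexx orbT.
have [c Gc c_gt0] := convex_orthant_pos_point G_convex G_orthant G_ne
  (supfun_coord_gt0 Psi_grow hG).
apply/eqP; rewrite eq_le; apply/andP; split.
  by apply: le_ereal_inf => _ [t [_ t1] <-]; exists t.
apply/ereal_infP => _ [t t1 <-].
have [r htr] : exists r, supfun G t = r%:E by rewrite -hG; apply/maxe0_EFin/Psi_fin.
have [t' St' ht'] := supfun_H1_ge_Sigma1 G_convex G_orthant G_lower Gc c_gt0 t1 htr.
apply: (@le_trans _ _ (maxe (psi_of Psi t') 0)).
  by apply: ereal_inf_lbound; exists t'.
by rewrite !hG htr.
Qed.
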